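(* Let $B(x)=\sum_{n\ge 0} b(n)x^n$ be a formal power series with $b(0)\neq 0$, let $B^{\Delta}(n,k)$ be the composita of $xB(x)$ (so in particular $B^{\Delta}(1,1)=b(0)$), and let $A(x)=1/B(x)$ be the reciprocal series, i.e. $A(x)B(x)=1$. Then the composita $A^{\Delta}(n,m)$ of $xA(x)$ is, for $n\ge m\ge 1$, $$A^{\Delta}(n,m)=\begin{cases}\dfrac{1}{B^{\Delta}(1,1)^m}, & n=m,\\[6pt] \dfrac{1}{B^{\Delta}(1,1)^m}\displaystyle\sum_{k=1}^{n-m}\binom{m+k-1}{m-1}\sum_{j=1}^{k}\frac{(-1)^j}{B^{\Delta}(1,1)^j}\binom{k}{j}B^{\Delta}(n-m+j,j), & n>m.\end{cases}$$
   Context: All generating functions are formal power series in $x$. For a power series $F(x)=\sum_{n\ge 1} f(n)x^n$ with zero constant term, its composita is the two-variable function $F^{\Delta}(n,k)$ ($n\ge k\ge 1$) defined by $F^{\Delta}(n,k)=\sum_{\lambda_1+\cdots+\lambda_k=n}f(\lambda_1)f(\lambda_2)\cdots f(\lambda_k)$, where the sum runs over all compositions of $n$ into exactly $k$ positive integer parts; equivalently $[F(x)]^k=\sum_{n\ge k}F^{\Delta}(n,k)x^n$. *)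

(* Formal power series over a field F are represented by
   their coefficient sequences  nat -> F. *)
From HB Require Import structures.
From mathcomp Require Import all_boot all_order all_algebra.
Set Implicit Arguments. Unset Strict Implicit. Unset Printing Implicit Defensive.
Import Order.TTheory GRing.Theory Num.Theory.
Local Open Scope ring_scope.

(* A composition is encoded as a
   finite function 'I_k -> 'I_n.+1 (each part is <= n) with all parts >= 1
   and parts summing to n.  The value f 0 is never used. *)
Definition composita (R : comRingType) (f : nat -> R) (n k : nat) : R :=
  \sum_(l : {ffun 'I_k -> 'I_n.+1}
          | [forall i, 0 < (l i : nat)]%N && ((\sum_(i < k) (l i : nat))%N == n))
    \prod_(i < k) f (l i : nat).

(* Coefficient sequence of x * B(x), given that of B(x). *)
Definition xmul (R : ringType) (b : nat -> R) : nat -> R :=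
  fun n => if n is n'.+1 then b n' else 0.

From HB Require Import structures.
From mathcomp Require Import all_boot all_order all_algebra.
From mathcomp Require Import ring zify.
Set Implicit Arguments. Unset Strict Implicit. Unset Printing Implicit Defensive.
Import Order.TTheory GRing.Theory Num.Theory.
Local Open Scope ring_scope.

(* The composita of
   x F(x) is a coefficient of a power of F:  [x^n] (x F)^m = [x^(n-m)] F^m.
   Writing beta = b(0) and D = 1 - B/beta (a series without constant term),
   A^m = beta^-m (1 - D)^-m = beta^-m sum_k C(m-1+k, m-1) D^k, and expanding
   D^k = sum_j C(k,j) (-1/beta)^j B^j by the binomial theorem yields the
   formula, the coefficients of B^j being again compositae of x B(x).

   Power series are handled through polynomial truncations: equalities
   modulo x^N are expressed with take_poly N. *)

Section Truncation.
Variables (R : nzRingType) (N : nat).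
Implicit Types p q : {poly R}.

Lemma take_polyMl p q : take_poly N (take_poly N p * q) = take_poly N (p * q).
Proof.
apply/polyP => i; rewrite !coef_take_poly; case: ltnP => // iN.
rewrite !coefM; apply: eq_bigr => j _.
by rewrite coef_take_poly (leq_ltn_trans _ iN) // -ltnS.
Qed.

Lemma take_polyMr p q : take_poly N (p * take_poly N q) = take_poly N (p * q).
Proof.
apply/polyP => i; rewrite !coef_take_poly; case: ltnP => // iN.
rewrite !coefM; apply: eq_bigr => j _.
by rewrite coef_take_poly (leq_ltn_trans _ iN) // leq_subr.
Qed.

Lemma take_polyXn p k : take_poly N (take_poly N p ^+ k) = take_poly N (p ^+ k).
Proof.
elim: k => [|k IHk] //.
by rewrite !exprS -take_polyMr IHk take_polyMr take_polyMl.
Qed.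

Lemma coef_exp_low p k i : p`_0 = 0 -> (i < k)%N -> (p ^+ k)`_i = 0.
Proof.
move=> p0; elim: k i => [|k IHk] i // ltik.
rewrite exprS coefM big1 // => -[[|j] ltji] _ /=; first by rewrite p0 mul0r.
by rewrite IHk ?mulr0 //; lia.
Qed.

End Truncation.

(* Expanding the truncated power by distributivity
   gives one monomial per function 'I_k -> 'I_n.+1; those contributing to x^n
   with nonzero weight are exactly the compositions of n into k parts. *)
Lemma composita_coef_exp (R : comNzRingType) (f : nat -> R) (p : {poly R}) n k :
  p`_0 = 0 -> (forall i, (0 < i <= n)%N -> p`_i = f i) ->
  composita f n k = (p ^+ k)`_n.
Proof.
move=> p0 pf.
have trunc_n (q : {poly R}) : (take_poly n.+1 q)`_n = q`_n.
  by rewrite coef_take_poly ltnSn.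
rewrite -trunc_n -take_polyXn trunc_n.
have monomial_prod (l : {ffun 'I_k -> 'I_n.+1}) :
    \prod_(i < k) (p`_(l i) *: 'X^(l i)) =
    (\prod_(i < k) p`_(l i)) *: 'X^(\sum_(i < k) (l i : nat)).
  by rewrite scaler_prod (big_morph _ (exprD 'X) (expr0 _)).
have -> : take_poly n.+1 p ^+ k = \prod_(i < k) \sum_(j < n.+1) p`_j *: 'X^j.
  by rewrite prodr_const card_ord /take_poly poly_def.
rewrite bigA_distr_bigA coef_sum /composita.
rewrite [RHS](bigID (fun l : {ffun 'I_k -> 'I_n.+1} =>
   [forall i, (0 < l i)%N] && ((\sum_(i < k) (l i : nat))%N == n))) /=.
rewrite [X in _ = _ + X]big1 ?addr0 => [|l].
  apply: eq_bigr => l /andP[/forallP l_pos /eqP l_sum].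
  rewrite monomial_prod coefZ coefXn l_sum eqxx mulr1.
  by apply: eq_bigr => i _; rewrite pf // l_pos -ltnS ltn_ord.
rewrite monomial_prod coefZ coefXn negb_and.
case/orP => [/forallPn[i]|/negbTE l_sum]; last by rewrite eq_sym l_sum mulr0.
by rewrite -eqn0Ngt => /eqP li; rewrite (bigD1 i) //= li p0 !mul0r.
Qed.

Lemma composita_xmul (R : comNzRingType) (f : nat -> R) (P : {poly R}) n j :
  (j <= n)%N -> (forall i, (i < n)%N -> P`_i = f i) ->
  composita (xmul f) n j = (P ^+ j)`_(n - j).
Proof.
move=> le_jn Pf.
rewrite (@composita_coef_exp _ _ ('X * P)) ?coefXM //.
  by rewrite exprMn coefXnM ltnNge le_jn.
by move=> [|i] //= lt_in; rewrite coefXM Pf.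
Qed.

(* The truncated negative binomial series  G_m = sum_(k<N) C(m+k,m) D^k
   inverts (1 - D)^(m+1) up to a multiple of D^N, in any commutative ring. *)
Section NegativeBinomialSeries.
Variables (R : comPzRingType) (D : R) (N : nat).

Definition neg_binomial_sum m := \sum_(0 <= k < N) 'C(m + k, m)%:R * D ^+ k.

Lemma neg_binomial_sum0 : (1 - D) * neg_binomial_sum 0 = 1 - D ^+ N.
Proof.
have := telescope_sumr (fun k => D ^+ k) (leq0n N); rewrite expr0 => telescope.
rewrite -[RHS]opprB -telescope -sumrN mulrBl mul1r mulr_sumr -sumrB.
by apply: eq_big_nat => k _; rewrite bin0 mul1r exprS opprB.
Qed.

(* Pascal's rule C(m+1+k, m+1) = C(m+k, m+1) + C(m+k, m) turns the product
   (1 - D) G_(m+1) into G_m plus a telescoping sum. *)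
Lemma neg_binomial_sumS m :
  (1 - D) * neg_binomial_sum m.+1 = neg_binomial_sum m - 'C(m + N, m.+1)%:R * D ^+ N.
Proof.
pose f k := 'C(m + k, m.+1)%:R * D ^+ k.
have -> : (1 - D) * neg_binomial_sum m.+1 =
    \sum_(0 <= k < N) ('C(m + k, m)%:R * D ^+ k - (f k.+1 - f k)).
  rewrite mulrBl mul1r mulr_sumr -sumrB; apply: eq_big_nat => k _.
  by rewrite /f addSn addnS binS natrD exprS; ring.
by rewrite big_split /= sumrN telescope_sumr // /f addn0 (bin_small (ltnSn m)) mul0r subr0.
Qed.

Lemma neg_binomial_sum_inverse m :
  exists r, (1 - D) ^+ m.+1 * neg_binomial_sum m = 1 + D ^+ N * r.
Proof.
elim: m => [|m [r IHm]]; first by exists (-1); rewrite expr1 neg_binomial_sum0 mulrN1.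
exists (r - 'C(m + N, m.+1)%:R * (1 - D) ^+ m.+1).
by rewrite exprSr -mulrA neg_binomial_sumS mulrBr IHm; ring.
Qed.

End NegativeBinomialSeries.

Lemma coef_binomial_exp (R : comNzRingType) (u : R) (p : {poly R}) k c :
  (0 < c)%N ->
  ((1 - u *: p) ^+ k)`_c = \sum_(1 <= j < k.+1) (- u) ^+ j * 'C(k, j)%:R * (p ^+ j)`_c.
Proof.
move=> c_gt0; rewrite -scaleNr exprDn coef_sum big_ord_recl big_add1 /= big_mkord.
rewrite expr0 mulr1 bin0 subn0 expr1n coefMn coef1 gtn_eqF // mul0rn add0r.
apply: eq_bigr => j _; rewrite /bump /= add1n.
by rewrite expr1n mul1r exprZn coefMn coefZ mulr_natr mulrnAl.
Qed.

Section ReciprocalPowers.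
Variables (F : fieldType) (N : nat) (A B : {poly F}).
Hypothesis AB1 : take_poly N (A * B) = take_poly N 1.
Hypothesis B0 : B`_0 != 0.
Let beta := B`_0.
Let D : {poly F} := 1 - beta^-1 *: B.

Lemma D_coef0 : D`_0 = 0.
Proof. by rewrite coefB coefZ coef1 mulVf // subrr. Qed.

(* A^(m+1) = A^(m+1) (1 - D)^(m+1) G_m = beta^-(m+1) G_m (A B)^(m+1)
   = beta^-(m+1) G_m  modulo x^N. *)
Lemma take_poly_exp_reciprocal m :
  take_poly N (A ^+ m.+1) = take_poly N ((beta ^- m.+1)%:P * neg_binomial_sum D N m).
Proof.
have [r inverse] := neg_binomial_sum_inverse D N m.
have DN : take_poly N (D ^+ N) = 0.
  apply/polyP => i; rewrite coef_take_poly coef0.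
  by case: ifP => // /(coef_exp_low D_coef0) ->.
have inverse_trunc :
    take_poly N ((1 - D) ^+ m.+1 * neg_binomial_sum D N m) = take_poly N 1.
  by rewrite inverse take_polyD -take_polyMl DN mul0r take_poly0r addr0.
have AB_exp : take_poly N ((A * B) ^+ m.+1) = take_poly N 1.
  by rewrite -take_polyXn AB1 take_polyXn expr1n.
rewrite -[A ^+ _]mulr1 -take_polyMr -inverse_trunc take_polyMr.
have -> : A ^+ m.+1 * ((1 - D) ^+ m.+1 * neg_binomial_sum D N m) =
    (beta ^- m.+1)%:P * neg_binomial_sum D N m * (A * B) ^+ m.+1.
  by rewrite /D opprB addrC subrK exprZn exprVn -mul_polyC exprMn; ring.
by rewrite -take_polyMr AB_exp take_polyMr mulr1.
Qed.

(* Coefficient c of A^(m+1): only the terms D^k with k <= c contribute. *)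
Lemma coef_exp_reciprocal_sum m c : (c < N)%N ->
  (A ^+ m.+1)`_c = beta ^- m.+1 * \sum_(0 <= k < c.+1) 'C(m + k, m)%:R * (D ^+ k)`_c.
Proof.
move=> lt_cN.
have := congr1 (fun p : {poly F} => p`_c) (take_poly_exp_reciprocal m).
rewrite /= !coef_take_poly lt_cN => ->; rewrite coefCM coef_sum.
rewrite (big_cat_nat _ (n := c.+1)) //= [X in _ + X]big1_seq ?addr0.
  by congr (_ * _); apply: eq_big_nat => k _; rewrite mulr_natl coefMn mulr_natl.
move=> k /andP[_]; rewrite mem_index_iota => /andP[lt_ck _].
by rewrite mulr_natl coefMn coef_exp_low ?mul0rn // D_coef0.
Qed.

Lemma coef0_exp_reciprocal m : (0 < N)%N -> (A ^+ m.+1)`_0 = beta ^- m.+1.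
Proof.
move=> N_gt0; rewrite coef_exp_reciprocal_sum // big_nat1 addn0 binn.
by rewrite expr0 coef1 eqxx !mulr1.
Qed.

Lemma coef_exp_reciprocal m c : (0 < c < N)%N ->
  (A ^+ m.+1)`_c = beta ^- m.+1 * \sum_(1 <= k < c.+1) 'C(m + k, m)%:R *
    \sum_(1 <= j < k.+1) (- beta^-1) ^+ j * 'C(k, j)%:R * (B ^+ j)`_c.
Proof.
case/andP=> c_gt0 lt_cN; rewrite coef_exp_reciprocal_sum // big_ltn //.
rewrite expr0 coef1 gtn_eqF // mulr0 add0r; congr (_ * _).
by apply: eq_big_nat => k _; rewrite coef_binomial_exp.
Qed.

End ReciprocalPowers.

Lemma take_poly_series_reciprocal (R : nzRingType) (a b : nat -> R) N :
  (forall n, \sum_(i < n.+1) a i * b (n - i)%N = (n == 0%N)%:R) ->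
  take_poly N (\poly_(i < N) a i * \poly_(i < N) b i) = take_poly N 1.
Proof.
move=> ab_inverse; apply/polyP => i; rewrite !coef_take_poly coefM coef1.
case: ifP => // lt_iN; rewrite -ab_inverse; apply: eq_bigr => -[j /= le_ji] _.
by rewrite !coef_poly !ifT //; lia.
Qed.

(* Main theorem: with A = 1/B, truncate both series at degree 2n (enough
   for all coefficients involved), translate every composita into a
   coefficient of a power via composita_xmul, and apply the two
   coefficient formulas for powers of the reciprocal. *)
Theorem theorem2 (F : fieldType) (b a : nat -> F) :
  b 0%N != 0 ->
  (forall n : nat, \sum_(i < n.+1) a i * b (n - i)%N = (n == 0%N)%:R) ->
  forall n m : nat, (1 <= m)%N -> (m <= n)%N ->
  composita (xmul a) n m =
    if n == m then 1 / composita (xmul b) 1 1 ^+ m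
    else 1 / composita (xmul b) 1 1 ^+ m *
      \sum_(1 <= k < (n - m).+1)
        'C(m + k - 1, m - 1)%:R *
        \sum_(1 <= j < k.+1)
          (-1) ^+ j / composita (xmul b) 1 1 ^+ j * 'C(k, j)%:R *
          composita (xmul b) (n - m + j) j.
Proof.
move=> b0_neq0 ab_inverse n [//|m] _ le_mn.
pose N := (n + n)%N; pose PA := \poly_(i < N) a i; pose PB := \poly_(i < N) b i.
have PA_coef i : (i < N)%N -> PA`_i = a i by rewrite coef_poly => ->.
have PB_coef i : (i < N)%N -> PB`_i = b i by rewrite coef_poly => ->.
have PAB1 : take_poly N (PA * PB) = take_poly N 1 by apply: take_poly_series_reciprocal.
have PB0 : PB`_0 != 0 by rewrite PB_coef //; lia.
have beta_eq : composita (xmul b) 1 1 = PB`_0.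
  by rewrite (composita_xmul (P := PB)) // => i lt_i1; rewrite PB_coef //; lia.
rewrite beta_eq div1r (composita_xmul (P := PA)) // => [|i lt_in]; last first.
  by rewrite PA_coef //; lia.
case: eqP => [->|/eqP ne_nm].
  by rewrite subnn (coef0_exp_reciprocal PAB1 PB0) //; lia.
rewrite (coef_exp_reciprocal PAB1 PB0); last by lia.
congr (_ * _); apply: eq_big_nat => k /andP[_ le_kc].
rewrite addSn subn1 /= subn1 /=; congr (_ * _); apply: eq_big_nat => j /andP[_ le_jk].
rewrite (composita_xmul (P := PB)) ?leq_addl // => [|i lt_i]; last first.
  by rewrite PB_coef //; lia.
by rewrite addnK [in LHS]exprNn exprVn.
Qed.
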